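(* Fix a query-answering mechanism $\mathcal K$. (1) If $(\boldsymbol\varepsilon,\boldsymbol\mu,\mathbf W)$ is semi-balanced and $\pi(\mathbf Q)=\sum_{i=1}^n\mu_i(\mathbf Q)$, then $(\pi,\boldsymbol\varepsilon,\boldsymbol\mu,\mathbf W)$ is balanced. (2) If $(\pi,\boldsymbol\varepsilon,\boldsymbol\mu,\mathbf W)$ is balanced and $\pi'$ is an arbitrage-free price function with $\pi'(\mathbf Q)\ge\pi(\mathbf Q)$ for all queries $\mathbf Q$, then $(\pi',\boldsymbol\varepsilon,\boldsymbol\mu,\mathbf W)$ is balanced.
   Context: Fix a bounded $X\subseteq\mathbb R$; databases are $\mathbf x\in X^n$, and $\mathbf x^{(i)}$ is $\mathbf x$ with the $i$-th coordinate set to $0$. Queries are pairs $\mathbf Q=(\mathbf q,v)$, $\mathbf q\in\mathbb R^n$, $v\in[0,\infty]$. A query-answering mechanism $\mathcal K$ assigns to each query $\mathbf Q$ a map $\mathcal K_{\mathbf Q}$ from databases to real random variables. The privacy loss is $\varepsilon_i(\mathcal K_{\mathbf Q})=\sup_{S,\mathbf x}\left|\log\frac{\Pr[\mathcal K_{\mathbf Q}(\mathbf x)\in S]}{\Pr[\mathcal K_{\mathbf Q}(\mathbf x^{(i)})\in S]}\right|$ (over $\mathbf x\in X^n$, measurable $S\subseteq\mathbb R$). A contract function is a non-decreasing $W_i:[0,\infty]\to[0,\infty]$ with $W_i(0)=0$. A price function is a map $\pi$ from queries to $[0,\infty]$. The determinacy relation $\mathbf S\rightarrow\mathbf Q$ is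 the smallest relation satisfying: (Summation) $\{(\mathbf q_1,v_1),\ldots,(\mathbf q_k,v_k)\}\rightarrow(\sum_j\mathbf q_j,\sum_jv_j)$; (Scalar multiplication) $\{(\mathbf q,v)\}\rightarrow(c\mathbf q,c^2v)$ for $c\in\mathbb R$; (Relaxation) $\{(\mathbf q,v)\}\rightarrow(\mathbf q,v')$ for $v\le v'$; (Transitivity) if $\mathbf S_j\rightarrow\mathbf Q_j$ for all $j$ and $\{\mathbf Q_1,\ldots,\mathbf Q_k\}\rightarrow\mathbf Q$ then $\mathbf S_1\uplus\cdots\uplus\mathbf S_k\rightarrow\mathbf Q$. A function $\mu$ from queries to $[0,\infty]$ is arbitrage-free if for every $m\ge1$, $\{\mathbf Q_1,\ldots,\mathbf Q_m\}\rightarrow\mathbf Q$ implies $\mu(\mathbf Q)\le\sum_j\mu(\mathbf Q_j)$. Micro-payments $\mu_i$ (functions from queries to $[0,\infty]$) are: fair if $q_i=0$ implies $\mu_i(\mathbf q,v)=0$; micro arbitrage-free if $\mu_i$ is arbitrage-free; compensating for $W_i$ if $\mu_i(\mathbf Q)\ge W_i(\varepsilon_i(\mathcal K_{\mathbf Q}))$ for all $\mathbf Q$; cost-recovering for $\pi$ if $\pi(\mathbf Q)\ge\sum_i\mu_i(\mathbf Q)$ for all $\mathbf Q$. $(\boldsymbol\varepsilon,\boldsymbol\mu,\mathbf W)$ is semi-balanced if every $\mu_i$ is fair, micro arbitrage-free and compensating for $W_i$. $(\pi,\boldsymbol\varepsilon,\boldsymbol\mu,\mathbf W)$ is balanced if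 $\pi$ is arbitrage-free and the $\mu_i$ are fair, micro arbitrage-free, cost-recovering for $\pi$ and compensating for the $W_i$. *)

From HB Require Import structures.
From mathcomp Require Import all_boot all_order all_algebra.
From mathcomp Require Import all_classical all_reals all_analysis.
From Stdlib Require Import Permutation.

Set Implicit Arguments.
Unset Strict Implicit.
Unset Printing Implicit Defensive.

Import Order.TTheory GRing.Theory Num.Theory.
Local Open Scope classical_set_scope.
Local Open Scope ring_scope.

Section PricingDefs.
Variables (R : realType) (n : nat).

Record query := Query {
  qvec : 'I_n -> R;
  qvar : \bar R;
  qvar_ge0 : (0 <= qvar)%E }.

(* Databases are functions 'I_n -> R (membership in X^n is imposed where
   needed).  x^(i): i-th coordinate set to 0. *)
Definition zero_at (x : 'I_n -> R) (i : 'I_n) : 'I_n -> R :=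
  fun j => if j == i then 0 else x j.

(* A query-answering mechanism: to each query and database, the law of the
   real random variable K_Q(x). *)
Definition mechanism := query -> ('I_n -> R) -> probability R R.

Definition log_ratio_abs (a b : \bar R) : \bar R :=
  if (a == 0%E) && (b == 0%E) then 0%E
  else if (a == 0%E) || (b == 0%E) then +oo%E
  else (`| ln (fine a / fine b) |)%:E.

Definition privacy_loss (X : set R) (K : mechanism) (i : 'I_n) (Q : query)
  : \bar R :=
  ereal_sup [set e | exists (x : 'I_n -> R) (S : set R),
                (forall j, X (x j)) /\ measurable S /\
                e = log_ratio_abs (K Q x S) (K Q (zero_at x i) S)].


Lemma qsum_ge0 k (Qs : 'I_k -> query) : (0 <= \sum_(j < k) qvar (Qs j))%E.
Proof. by apply: sume_ge0 => j _; exact: qvar_ge0. Qed.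

Definition qsum k (Qs : 'I_k -> query) : query :=
  @Query (fun i => \sum_(j < k) qvec (Qs j) i) _ (qsum_ge0 Qs).

Lemma qscale_ge0 (c : R) (Q : query) : (0 <= (c ^+ 2)%:E * qvar Q)%E.
Proof. by apply: mule_ge0; [rewrite lee_fin sqr_ge0 | exact: qvar_ge0]. Qed.

Definition qscale (c : R) (Q : query) : query :=
  @Query (fun i => c * qvec Q i) _ (qscale_ge0 c Q).

Lemma qrelax_ge0 (Q : query) (v' : \bar R) : (qvar Q <= v')%E -> (0 <= v')%E.
Proof. by move=> h; apply: le_trans h; exact: qvar_ge0. Qed.

Definition qrelax (Q : query) (v' : \bar R) (h : (qvar Q <= v')%E) : query :=
  @Query (qvec Q) v' (qrelax_ge0 h).

(* S -> Q, with the multiset S represented by a list up to permutation. *)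
Inductive determines : seq query -> query -> Prop :=
| det_sum k (Qs : 'I_k -> query) :
    (0 < k)%N -> determines [seq Qs j | j <- enum 'I_k] (qsum Qs)
| det_scale (c : R) (Q : query) : determines [:: Q] (qscale c Q)
| det_relax (Q : query) (v' : \bar R) (h : (qvar Q <= v')%E) :
    determines [:: Q] (qrelax h)
| det_trans k (Ss : 'I_k -> seq query) (Qs : 'I_k -> query) (Q : query) :
    (0 < k)%N -> (forall j, determines (Ss j) (Qs j)) ->
    determines [seq Qs j | j <- enum 'I_k] Q ->
    determines (flatten [seq Ss j | j <- enum 'I_k]) Q
| det_perm (S S' : seq query) (Q : query) :
    Permutation S S' -> determines S Q -> determines S' Q.

Definition nonneg_fun (f : query -> \bar R) : Prop := forall Q, (0 <= f Q)%E.

Definition arbitrage_free (f : query -> \bar R) : Prop :=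
  forall (S : seq query) (Q : query), S <> [::] -> determines S Q ->
    (f Q <= \sum_(P <- S) f P)%E.

Definition contract_function (W : \bar R -> \bar R) : Prop :=
  [/\ W 0%E = 0%E,
      forall a b, (0 <= a)%E -> (a <= b)%E -> (W a <= W b)%E &
      forall a, (0 <= a)%E -> (0 <= W a)%E].

Definition fair (i : 'I_n) (mu_i : query -> \bar R) : Prop :=
  forall Q, qvec Q i = 0 -> mu_i Q = 0%E.

Definition compensating (X : set R) (K : mechanism) (i : 'I_n)
  (mu_i : query -> \bar R) (W_i : \bar R -> \bar R) : Prop :=
  forall Q, (W_i (privacy_loss X K i Q) <= mu_i Q)%E.

Definition cost_recovering (pi : query -> \bar R) (mu : 'I_n -> query -> \bar R)
  : Prop := forall Q, (\sum_(i < n) mu i Q <= pi Q)%E.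

Definition semi_balanced (X : set R) (K : mechanism)
  (mu : 'I_n -> query -> \bar R) (W : 'I_n -> \bar R -> \bar R) : Prop :=
  forall i, [/\ fair i (mu i), arbitrage_free (mu i) & compensating X K i (mu i) (W i)].

Definition balanced (X : set R) (K : mechanism) (pi : query -> \bar R)
  (mu : 'I_n -> query -> \bar R) (W : 'I_n -> \bar R -> \bar R) : Prop :=
  [/\ arbitrage_free pi,
      forall i, [/\ fair i (mu i), arbitrage_free (mu i) & compensating X K i (mu i) (W i)]
    & cost_recovering pi mu].

End PricingDefs.

From HB Require Import structures.
From mathcomp Require Import all_boot all_order all_algebra.
From mathcomp Require Import all_classical all_reals all_analysis.
Import Order.TTheory GRing.Theory Num.Theory.
Local Open Scope classical_set_scope.
Local Open Scope ring_scope.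

(* Both parts are bookkeeping on the definitions: a sum of arbitrage-free
   functions is arbitrage-free (exchange the two sums), and the
   cost-recovering inequality survives raising the price. Fairness,
   micro arbitrage-freeness and compensation do not involve the price. *)

Section Balance.
Variables (R : realType) (n : nat) (X : set R) (K : mechanism R n).
Variables (mu : 'I_n -> query R n -> \bar R) (W : 'I_n -> \bar R -> \bar R).

Lemma arbitrage_free_sum (I : Type) (r : seq I) (P : pred I)
    (f : I -> query R n -> \bar R) :
  (forall i, P i -> arbitrage_free (f i)) ->
  arbitrage_free (fun Q => \sum_(i <- r | P i) f i Q)%E.
Proof.
move=> af S Q S_neq0 SQ; rewrite exchange_big /=.
by apply: lee_sum => i Pi; exact: af.
Qed.

Lemma cost_recovering_le (pi pi' : query R n -> \bar R) :
  (forall Q, (pi Q <= pi' Q)%E) ->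
  cost_recovering pi mu -> cost_recovering pi' mu.
Proof. by move=> le_pi cr Q; exact: le_trans (cr Q) (le_pi Q). Qed.

Lemma balanced_sum_price (pi : query R n -> \bar R) :
  semi_balanced X K mu W -> (forall Q, pi Q = (\sum_(i < n) mu i Q)%E) ->
  balanced X K pi mu W.
Proof.
move=> sb pi_sum; have -> : pi = (fun Q => \sum_(i < n) mu i Q)%E.
  exact/funext.
split=> //; apply: arbitrage_free_sum => i _.
by case: (sb i).
Qed.

Lemma balanced_le_price (pi pi' : query R n -> \bar R) :
  balanced X K pi mu W -> arbitrage_free pi' ->
  (forall Q, (pi Q <= pi' Q)%E) -> balanced X K pi' mu W.
Proof.
move=> [_ hmu cr] af' le_pi; split=> //.
exact: cost_recovering_le cr.
Qed.

End Balance.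

Theorem proposition11 (R : realType) (n : nat) (X : set R)
  (hX : exists M : R, forall x, X x -> `|x| <= M)
  (K : mechanism R n)
  (mu : 'I_n -> query R n -> \bar R) (W : 'I_n -> \bar R -> \bar R)
  (hW : forall i, contract_function (W i))
  (hmu : forall i, nonneg_fun (mu i)) :
  (forall pi : query R n -> \bar R,
     semi_balanced X K mu W ->
     (forall Q, pi Q = (\sum_(i < n) mu i Q)%E) ->
     balanced X K pi mu W)
  /\
  (forall pi pi' : query R n -> \bar R,
     nonneg_fun pi -> nonneg_fun pi' ->
     balanced X K pi mu W ->
     arbitrage_free pi' ->
     (forall Q, (pi Q <= pi' Q)%E) ->
     balanced X K pi' mu W).
Proof.
split; first exact: balanced_sum_price.
by move=> pi pi' _ _; exact: balanced_le_price.
Qed.
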